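(* There exist $p,k,E$ and source covariance matrices $\Sigma_1,\dots,\Sigma_E$ such that every matrix $V^{\mathrm{seq}}=[v_1,\dots,v_k]$ produced by the sequential procedure below fails to solve rank-$k$ minPCA. The sequential procedure chooses orthonormal vectors with $v_1\in\arg\max_{v\in\mathbb{R}^p,\|v\|=1}\min_{e\in\mathcal{E}}\mathcal{L}_{\mathrm{var}}(v;\Sigma_e)$ and, for $2\le j\le k$, $v_j\in\arg\max\{\min_{e\in\mathcal{E}}\mathcal{L}_{\mathrm{var}}([v_1,\dots,v_{j-1},v];\Sigma_e): v\in\mathbb{R}^p,\ \|v\|=1,\ v\perp v_i\ \forall i<j\}$.
   Context: $\mathcal{O}_{p\times k}=\{V\in\mathbb{R}^{p\times k}:V^\top V=I_k\}$; source domains $\mathcal{E}=\{1,\dots,E\}$ with symmetric positive semidefinite covariances $\Sigma_e$ of positive trace. $\mathcal{L}_{\mathrm{var}}(V;\Sigma)=\operatorname{Tr}(V^\top\Sigma V)$ for any $V$ with orthonormal columns. $V^*$ solves rank-$k$ minPCA if $V^*\in\arg\max_{V\in\mathcal{O}_{p\times k}}\min_{e\in\mathcal{E}}\mathcal{L}_{\mathrm{var}}(V;\Sigma_e)$. *)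

From HB Require Import structures.
From mathcomp Require Import all_boot all_order all_algebra.
From mathcomp Require Import Rstruct.
From Stdlib Require Import Rdefinitions.
Set Implicit Arguments. Unset Strict Implicit. Unset Printing Implicit Defensive.
Import Order.TTheory GRing.Theory Num.Theory.
Local Open Scope ring_scope.

Definition orthonormal (p m : nat) (V : 'M[R]_(p, m)) : Prop :=
  V^T *m V = 1%:M.

Definition Lvar (p m : nat) (V : 'M[R]_(p, m)) (S : 'M[R]_p) : R :=
  \tr (V^T *m S *m V).

(* min over the E.+1 source domains {0,...,E} of L_var(V; Sigma_e). *)
Definition minLvar (p m E : nat) (Sig : 'I_E.+1 -> 'M[R]_p) (V : 'M[R]_(p, m)) : R :=
  \big[Num.min/Lvar V (Sig ord0)]_(e < E.+1) Lvar V (Sig e).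

Definition valid_cov (p : nat) (S : 'M[R]_p) : Prop :=
  S^T = S /\ (forall x : 'cV[R]_p, 0 <= (x^T *m S *m x) 0 0) /\ 0 < \tr S.

Definition minPCA_sol (p k E : nat) (Sig : 'I_E.+1 -> 'M[R]_p) (V : 'M[R]_(p, k)) : Prop :=
  orthonormal V /\
  forall W : 'M[R]_(p, k), orthonormal W -> minLvar Sig W <= minLvar Sig V.

(* [v_1, ..., v_{j-1}, v] (0-based: the first j columns of V followed by v),
   a p x (j+1) matrix. *)
Definition prefix_with (p k : nat) (V : 'M[R]_(p, k)) (j : 'I_k) (v : 'cV[R]_p)
  : 'M[R]_(p, j.+1) :=
  \matrix_(a < p, b < j.+1)
     if (b < j)%nat then V a (widen_ord (ltn_ord j) b) else v a 0.

Definition admissible (p k : nat) (V : 'M[R]_(p, k)) (j : 'I_k) (v : 'cV[R]_p) : Prop :=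
  v^T *m v = 1%:M /\ forall i : 'I_k, (i < j)%nat -> v^T *m col i V = 0.

Definition sequential_output (p k E : nat) (Sig : 'I_E.+1 -> 'M[R]_p)
  (V : 'M[R]_(p, k)) : Prop :=
  forall j : 'I_k,
    admissible V j (col j V) /\
    forall v : 'cV[R]_p, admissible V j v ->
      minLvar Sig (prefix_with V j v) <= minLvar Sig (prefix_with V j (col j V)).

From Pilot Require Import Defs.
From HB Require Import structures.
From mathcomp Require Import all_boot all_order all_algebra.
From mathcomp Require Import Rstruct.
From Stdlib Require Import Rdefinitions.
From mathcomp Require Import ring lra.
Import Order.TTheory GRing.Theory Num.Theory.
Set Implicit Arguments. Unset Strict Implicit. Unset Printing Implicit Defensive.
Local Open Scope ring_scope.

(* Take Sigma_w = w w^T + e_z e_z^T / 2 on R^3 for the four horizontal directions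
   w = e_x, e_y, e_x + e_y, e_x - e_y.  For a horizontal vector (x, y), the smallest
   of x^2, y^2, (x + y)^2, (x - y)^2 is at most (x^2 + y^2) / 2, and only (x, y) = 0
   attains that bound: equality in the first two forces x^2 = y^2, and then one of
   (x + y)^2, (x - y)^2 vanishes.  Hence the greedy first direction must be the
   vertical e_z (worst-case variance 1/2), the second one is then horizontal, and the
   resulting frame has worst-case variance < 1, whereas the frame [e_x, e_y] reaches 1. *)

Lemma le_minLvarP (p m E : nat) (Sig : 'I_E.+1 -> 'M[R]_p) (V : 'M[R]_(p, m)) (c : R) :
  reflect (forall e, c <= Lvar V (Sig e)) (c <= minLvar Sig V).
Proof.
apply: (iffP (bigmin_geP _ _ _ _)) => [[_ cle] e | cle]; first exact: cle.
by split=> [|e _]; apply: cle.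
Qed.

Lemma Lvar_entries (p m : nat) (V : 'M[R]_(p, m)) (S : 'M[R]_p) :
  Lvar V S = \sum_(a < m) \sum_(i < p) \sum_(j < p) V i a * S i j * V j a.
Proof.
rewrite /Lvar /mxtrace; apply: eq_bigr => a _.
rewrite !mxE exchange_big /=; apply: eq_bigr => j _.
by rewrite !mxE mulr_suml; apply: eq_bigr => i _; rewrite !mxE.
Qed.

Lemma orthonormal_entries (p m : nat) (V : 'M[R]_(p, m)) :
  Defs.orthonormal V -> forall a b, \sum_(i < p) V i a * V i b = (a == b)%:R.
Proof.
move=> /matrixP oV a b; have := oV a b; rewrite !mxE => <-.
by apply: eq_bigr => i _; rewrite mxE.
Qed.

Lemma prefix_with0 (p k : nat) (V : 'M[R]_(p, k.+1)) (v : 'cV[R]_p) :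
  prefix_with V ord0 v = v.
Proof. by apply/matrixP => a b; rewrite !mxE ord1. Qed.

Definition ix : 'I_3 := @Ordinal 3 0 isT.
Definition iy : 'I_3 := @Ordinal 3 1 isT.
Definition iz : 'I_3 := @Ordinal 3 2 isT.

Lemma sum_ord3 (f : 'I_3 -> R) : \sum_(i < 3) f i = f ix + f iy + f iz.
Proof.
rewrite !big_ord_recr big_ord0 /= add0r.
by congr (f _ + f _ + f _); apply: val_inj.
Qed.

Lemma sum_ord2 (f : 'I_2 -> R) : \sum_(i < 2) f i = f ord0 + f ord_max.
Proof. by rewrite big_ord_recr big_ord1; congr (f _ + _); apply: val_inj. Qed.

Definition dir (e : 'I_4) : R * R :=
  match val e with 0 => (1, 0) | 1 => (0, 1) | 2 => (1, 1) | _ => (1, -1) end%N.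

Definition dir_sq (e : 'I_4) (x y : R) : R := ((dir e).1 * x + (dir e).2 * y) ^+ 2.

Lemma dir_sq0 (e : 'I_4) : dir_sq e 0 0 = 0.
Proof. by rewrite /dir_sq !mulr0 addr0 expr0n. Qed.

Lemma dir_sq_half_norm_eq0 (x y : R) :
  (forall e, (x ^+ 2 + y ^+ 2) / 2 <= dir_sq e x y) -> x = 0 /\ y = 0.
Proof.
move=> le_dir.
have := le_dir (@Ordinal 4 0 isT); have := le_dir (@Ordinal 4 1 isT).
have := le_dir (@Ordinal 4 2 isT); have := le_dir (@Ordinal 4 3 isT).
rewrite /dir_sq /= !mul1r !mul0r addr0 add0r mulN1r => hm hp hy hx.
have sq_xy : x ^+ 2 = y ^+ 2 by lra.
have x2 : x ^+ 2 = 0.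
  by apply/eqP; rewrite -[_ == 0]orbb -mulf_eq0; apply/eqP; nra.
by split; apply/eqP; rewrite -sqrf_eq0 ?x2 // -sq_xy x2.
Qed.

Definition cov (w : R * R) : 'M[R]_3 :=
  let wv i := if i == ix then w.1 else if i == iy then w.2 else 0 in
  \matrix_(i, j) (wv i * wv j + (if (i == iz) && (j == iz) then 2^-1 else 0)).

Definition Sigma (e : 'I_4) : 'M[R]_3 := cov (dir e).

Lemma Lvar_Sigma (m : nat) (V : 'M[R]_(3, m)) (e : 'I_4) :
  Lvar V (Sigma e) = \sum_(a < m) (dir_sq e (V ix a) (V iy a) + V iz a ^+ 2 / 2).
Proof.
rewrite Lvar_entries; apply: eq_bigr => a _.
by rewrite !sum_ord3 !mxE /dir_sq /=; ring.
Qed.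

Lemma valid_cov_Sigma (e : 'I_4) : valid_cov (Sigma e).
Proof.
split; [|split].
- by apply/matrixP => i j; rewrite !mxE mulrC andbC.
- move=> v; have -> : (v^T *m Sigma e *m v) 0 0 = Lvar v (Sigma e).
    by rewrite /Lvar /mxtrace big_ord1.
  rewrite Lvar_Sigma big_ord1 /dir_sq.
  by apply: addr_ge0; [exact: sqr_ge0 | apply: mulr_ge0; [exact: sqr_ge0 | lra]].
- rewrite /mxtrace sum_ord3 !mxE /=.
  have : 0 <= (dir e).1 * (dir e).1 + (dir e).2 * (dir e).2 by nra.
  lra.
Qed.

Lemma sequential_first_col_vertical (k : nat) (V : 'M[R]_(3, k.+1)) :
  sequential_output Sigma V -> V ix ord0 = 0 /\ V iy ord0 = 0.
Proof.
move=> /(_ ord0) [[unit_v _] opt_v].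
have := orthonormal_entries unit_v 0 0; rewrite sum_ord3 !mxE /= => norm_v.
pose ez : 'cV[R]_3 := \col_i (if i == iz then 1 else 0).
have adm_ez : admissible V ord0 ez.
  split=> //; apply/matrixP => i j; rewrite !ord1 !mxE sum_ord3 !mxE /=; lra.
have half_le_ez : 2^-1 <= minLvar Sigma ez.
  apply/le_minLvarP => e; rewrite Lvar_Sigma big_ord1 !mxE /= dir_sq0 expr1n; lra.
have := opt_v ez adm_ez; rewrite !prefix_with0 => /(le_trans half_le_ez).
move=> /le_minLvarP half_le_v; apply: dir_sq_half_norm_eq0 => e.
have := half_le_v e; rewrite Lvar_Sigma big_ord1 !mxE; lra.
Qed.

Lemma minLvar_vertical_lt1 (V : 'M[R]_(3, 2)) :
  Defs.orthonormal V -> V ix ord0 = 0 -> V iy ord0 = 0 -> minLvar Sigma V < 1.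
Proof.
move=> oV x0 y0; have := orthonormal_entries oV.
move=> /[dup] /(_ ord0 ord0) n00 /[dup] /(_ ord0 ord_max) n01 /(_ ord_max ord_max) n11.
rewrite !sum_ord3 x0 y0 /= in n00 n01 n11.
have z1 : V iz ord_max = 0 by nra.
rewrite z1 in n11; rewrite ltNge; apply/negP => /le_minLvarP one_le_V.
suff [x1 y1] : V ix ord_max = 0 /\ V iy ord_max = 0 by rewrite x1 y1 in n11; lra.
apply: dir_sq_half_norm_eq0 => e; have := one_le_V e.
rewrite Lvar_Sigma sum_ord2 x0 y0 z1 dir_sq0; lra.
Qed.

Definition std_frame : 'M[R]_(3, 2) := \matrix_(i, j) (val i == val j)%:R.

Lemma orthonormal_std_frame : Defs.orthonormal std_frame.
Proof.
apply/matrixP => a b; rewrite !mxE sum_ord3 !mxE.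
by case: a => [[|[|]] ?]; case: b => [[|[|]] ?] //=; lra.
Qed.

Lemma one_le_minLvar_std_frame : 1 <= minLvar Sigma std_frame.
Proof.
apply/le_minLvarP => e; rewrite Lvar_Sigma sum_ord2 !mxE /dir_sq /=.
by case: e => [[|[|[|[|]]]] ?] //=; lra.
Qed.

Theorem mainTheorem4 :
  exists (p k E : nat) (Sig : 'I_E.+1 -> 'M[R]_p),
    (0 < k)%nat /\ (k <= p)%nat /\
    (forall e, valid_cov (Sig e)) /\
    forall V : 'M[R]_(p, k), sequential_output Sig V -> ~ minPCA_sol Sig V.
Proof.
exists 3%N, 2%N, 3%N, Sigma.
do 3!split => //; first exact: valid_cov_Sigma.
move=> V seqV [oV optV].
have [x0 y0] := sequential_first_col_vertical seqV.
have := le_trans one_le_minLvar_std_frame (optV _ orthonormal_std_frame).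
by rewrite leNgt minLvar_vertical_lt1.
Qed.
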